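(* Let $N\ge 1$ and let $\lambda,\mu$ be complex parameters. Consider fields $x,\widetilde{x},\widehat{x},\widehat{\widetilde{x}}\in\mathbb{C}^N$ with indices taken modulo $N$. Suppose that $x,\widetilde{x},\widehat{x}$ satisfy, for all $k$, $$(E)\qquad \frac{\lambda}{\widetilde{x}_k-x_k}+\frac{\lambda}{x_k-\widetilde{x}_{k-1}}=\frac{\mu}{\widehat{x}_k-x_k}+\frac{\mu}{x_k-\widehat{x}_{k-1}}.$$ Consider the superposition formulas $$(S1)\qquad \mu(\widehat{\widetilde{x}}_k-\widehat{x}_k)(x_{k+1}-\widetilde{x}_k)=\lambda(\widehat{\widetilde{x}}_k-\widetilde{x}_k)(x_{k+1}-\widehat{x}_k),$$ $$(S2)\qquad \mu(\widetilde{x}_{k+1}-x_{k+1})(\widehat{x}_{k+1}-\widehat{\widetilde{x}}_k)=\lambda(\widehat{x}_{k+1}-x_{k+1})(\widetilde{x}_{k+1}-\widehat{\widetilde{x}}_k).$$ Then, by virtue of $(E)$, (S1) and (S2) are equivalent, and if $\widehat{\widetilde{x}}$ is defined by either of them, then for all $k$: $$(E_1)\quad \frac{\lambda}{\widetilde{x}_k-x_k}+\frac{\lambda}{x_{k+1}-\widetilde{x}_k}=\frac{\mu}{\widehat{\widetilde{x}}_k-\widetilde{x}_k}+\frac{\mu}{\widetilde{x}_k-\widehat{\widetilde{x}}_{k-1}},$$ $$(E_2)\quad \frac{\mu}{\widehat{x}_k-x_k}+\frac{\mu}{x_{k+1}-\widehat{x}_k}=\frac{\lambda}{\widehat{\widetilde{x}}_k-\widehat{x}_k}+\frac{\lambda}{\widehat{x}_k-\widehat{\widetilde{x}}_{k-1}},$$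 $$(E_{12})\quad \frac{\lambda}{\widehat{\widetilde{x}}_k-\widehat{x}_k}+\frac{\lambda}{\widehat{x}_{k+1}-\widehat{\widetilde{x}}_k}=\frac{\mu}{\widehat{\widetilde{x}}_k-\widetilde{x}_k}+\frac{\mu}{\widetilde{x}_{k+1}-\widehat{\widetilde{x}}_k}.$$
   Context: These are the corner equations for two Bäcklund transformations $F_\lambda,F_\mu$ of the periodic symmetric rational additive Toda-type system $\ddot x_k=-\dot x_k^2\big(\frac{1}{x_{k+1}-x_k}-\frac{1}{x_k-x_{k-1}}\big)$, where $F_\lambda:(x,p)\mapsto(\widetilde x,\widetilde p)$ is $p_k=\frac{\lambda}{\widetilde x_k-x_k}+\frac{\lambda}{x_k-\widetilde x_{k-1}}$, $\widetilde p_k=\frac{\lambda}{\widetilde x_k-x_k}+\frac{\lambda}{x_{k+1}-\widetilde x_k}$; hats denote the action of $F_\mu$. *)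

(* Complex numbers are modelled as R[i] = complex R for an
   arbitrary R : realType (a complete archimedean ordered field, i.e. the reals). *)
From HB Require Import structures.
From mathcomp Require Import all_boot all_order all_algebra.
From mathcomp Require Import reals.
From mathcomp Require Export complex.
Set Implicit Arguments. Unset Strict Implicit. Unset Printing Implicit Defensive.
Import Order.TTheory GRing.Theory Num.Theory.
Local Open Scope ring_scope.

(* Indices modulo N: a field on the periodic lattice is a function 'I_N -> C;
   k+1 and k-1 are the cyclic successor / predecessor. *)
Definition nx N (k : 'I_N) : 'I_N := ordS k.
Definition pv N (k : 'I_N) : 'I_N := ord_pred k.

Section Eqs.
Variables (C : fieldType) (N : nat) (lam mu : C) (x xt xh xth : 'I_N -> C).

Definition cornerE (k : 'I_N) : Prop :=
  lam / (xt k - x k) + lam / (x k - xt (pv k)) =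
  mu / (xh k - x k) + mu / (x k - xh (pv k)).
Definition cornerS1 (k : 'I_N) : Prop :=
  mu * (xth k - xh k) * (x (nx k) - xt k) =
  lam * (xth k - xt k) * (x (nx k) - xh k).
Definition cornerS2 (k : 'I_N) : Prop :=
  mu * (xt (nx k) - x (nx k)) * (xh (nx k) - xth k) =
  lam * (xh (nx k) - x (nx k)) * (xt (nx k) - xth k).
(* coefficient of xth_k in (S1) (resp. (S2)) is nonzero, i.e. (S1) (resp. (S2))
   actually defines xth_k *)
Definition definesS1 (k : 'I_N) : Prop :=
  mu * (x (nx k) - xt k) - lam * (x (nx k) - xh k) != 0.
Definition definesS2 (k : 'I_N) : Prop :=
  lam * (xh (nx k) - x (nx k)) - mu * (xt (nx k) - x (nx k)) != 0.
Definition cornerE1 (k : 'I_N) : Prop :=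
  lam / (xt k - x k) + lam / (x (nx k) - xt k) =
  mu / (xth k - xt k) + mu / (xt k - xth (pv k)).
Definition cornerE2 (k : 'I_N) : Prop :=
  mu / (xh k - x k) + mu / (x (nx k) - xh k) =
  lam / (xth k - xh k) + lam / (xh k - xth (pv k)).
Definition cornerE12 (k : 'I_N) : Prop :=
  lam / (xth k - xh k) + lam / (xh (nx k) - xth k) =
  mu / (xth k - xt k) + mu / (xt (nx k) - xth k).
End Eqs.

(* A relation of the form  mu (Y - H)(X - T) = lam (Y - T)(X - H)  is affine in Y, with
   coefficient proportional to  slope = mu/(X - H) - lam/(X - T).  Equation (E) at site k+1
   says exactly that the two such relations through x_{k+1}, namely (S1) and (S2) at k, have
   the same slope; hence they are equivalent.  Moreover every such relation gives
   mu/(Y - T) - lam/(X - T) = (lam - mu)/(T - H), a quantity that does not depend on (X, Y):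
   comparing the two relations through (xt_k, xh_k) yields (E1), and exchanging the roles of
   (lam, xt) and (mu, xh) yields (E2).  Likewise lam/(Y - H) - mu/(Y - T) equals the slope,
   so comparing the two relations through (x_{k+1}, xth_k) yields (E12). *)

From mathcomp Require Import all_boot all_algebra.
From mathcomp Require Import reals complex ring.
Set Implicit Arguments. Unset Strict Implicit. Unset Printing Implicit Defensive.
Import GRing.Theory.
Local Open Scope ring_scope.

Section CornerRelation.
Variable F : fieldType.
Implicit Types lam mu T H X Y : F.

(* (S1) at k is [corner_rel (xt k) (xh k) (x k.+1) (xth k)] and (S2) at k is
   [corner_rel (xt k.+1) (xh k.+1) (x k.+1) (xth k)]. *)
Definition corner_rel lam mu T H X Y := mu * (Y - H) * (X - T) = lam * (Y - T) * (X - H).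

Definition slope lam mu T H X := mu / (X - H) - lam / (X - T).

Lemma corner_relC lam mu T H X Y :
  corner_rel lam mu T H X Y -> corner_rel mu lam H T X Y.
Proof. exact: esym. Qed.

Lemma slopeE lam mu T H X : X != T -> X != H ->
  mu * (X - T) - lam * (X - H) = (X - T) * (X - H) * slope lam mu T H X.
Proof. by move=> hT hH; rewrite /slope; field; rewrite !subr_eq0 hT hH. Qed.

Lemma slope_neq0 lam mu T H X : X != T -> X != H ->
  (mu * (X - T) - lam * (X - H) != 0) = (slope lam mu T H X != 0).
Proof. by move=> hT hH; rewrite slopeE // !mulf_eq0 !subr_eq0 (negbTE hT) (negbTE hH). Qed.

Lemma corner_rel_slope lam mu T H X Y : X != T -> X != H ->
  corner_rel lam mu T H X Y <-> (Y - X) * slope lam mu T H X = lam - mu.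
Proof.
move=> hT hH; have hTH : (X - T) * (X - H) != 0 by rewrite mulf_neq0 ?subr_eq0.
have expand : mu * (Y - H) * (X - T) - lam * (Y - T) * (X - H) =
    (X - T) * (X - H) * ((Y - X) * slope lam mu T H X - (lam - mu)).
  by rewrite /slope; field; rewrite !subr_eq0 hT hH.
rewrite /corner_rel; split=> /eqP; rewrite -subr_eq0.
  by rewrite expand mulf_eq0 (negbTE hTH) subr_eq0 => /eqP.
by move=> h; apply/eqP; rewrite -subr_eq0 expand (eqP h) mulr0.
Qed.

Lemma corner_rel_transfer lam mu T0 H0 T1 H1 X Y :
  X != T0 -> X != H0 -> X != T1 -> X != H1 ->
  slope lam mu T0 H0 X = slope lam mu T1 H1 X ->
  corner_rel lam mu T0 H0 X Y <-> corner_rel lam mu T1 H1 X Y.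
Proof.
move=> hT0 hH0 hT1 hH1 eq_slope.
by rewrite (corner_rel_slope _ _ _ hT0 hH0) (corner_rel_slope _ _ _ hT1 hH1) eq_slope.
Qed.

Lemma slope_eq_of_corner lam mu T0 H0 T1 H1 X :
  lam / (T1 - X) + lam / (X - T0) = mu / (H1 - X) + mu / (X - H0) ->
  slope lam mu T0 H0 X = slope lam mu T1 H1 X.
Proof.
rewrite /slope -(opprB H1) -(opprB T1) !invrN !mulrN.
set a := lam / (T1 - X); set b := lam / (X - T0).
set c := mu / (H1 - X); set d := mu / (X - H0).
move=> hE; have -> : d = a + b - c by rewrite hE addrAC subrr add0r.
ring.
Qed.

Lemma corner_rel_neq lam mu T H X Y :
  slope lam mu T H X != 0 -> corner_rel lam mu T H X Y -> Y != T -> T != H.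
Proof.
move=> hs hrel hYT; apply/eqP=> eTH; move: hs hrel; rewrite /slope /corner_rel -eTH.
rewrite -mulrBl mulf_eq0 negb_or invr_eq0 => /andP[hml hXT] /eqP.
rewrite -subr_eq0 -!mulrBl.
by apply/negP; rewrite !mulf_neq0 // subr_eq0.
Qed.

Lemma corner_rel_residue lam mu T H X Y : corner_rel lam mu T H X Y ->
  Y != T -> X != T -> T != H -> mu / (Y - T) - lam / (X - T) = (lam - mu) / (T - H).
Proof.
move=> hrel hYT hXT hTH.
have expand : mu / (Y - T) - lam / (X - T) - (lam - mu) / (T - H) =
    (mu * (Y - H) * (X - T) - lam * (Y - T) * (X - H)) / ((Y - T) * (X - T) * (T - H)).
  by field; rewrite !subr_eq0 hYT hXT hTH.
by apply/eqP; rewrite -subr_eq0 expand hrel subrr mul0r.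
Qed.

Lemma corner_rel_balance lam mu T H X Y : corner_rel lam mu T H X Y ->
  Y != T -> Y != H -> X != T -> X != H ->
  lam / (Y - H) - mu / (Y - T) = slope lam mu T H X.
Proof.
move=> hrel hYT hYH hXT hXH.
have expand : lam / (Y - H) - mu / (Y - T) - slope lam mu T H X =
    ((X - T) + (Y - H)) * (lam * (Y - T) * (X - H) - mu * (Y - H) * (X - T)) /
    ((Y - H) * (Y - T) * (X - H) * (X - T)).
  by rewrite /slope; field; rewrite !subr_eq0 hYT hYH hXT hXH.
by apply/eqP; rewrite -subr_eq0 expand hrel subrr mulr0 mul0r.
Qed.

Lemma corner_rel_pairTH lam mu T H X X' Y Y' :
  corner_rel lam mu T H X Y -> corner_rel lam mu T H X' Y' -> T != H ->
  T != X' -> X != T -> Y != T -> T != Y' ->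
  lam / (T - X') + lam / (X - T) = mu / (Y - T) + mu / (T - Y').
Proof.
move=> hrel hrel' hTH hTX' hXT hYT hTY'.
have hX'T : X' != T by rewrite eq_sym.
have hY'T : Y' != T by rewrite eq_sym.
rewrite -(opprB X') -(opprB Y') !invrN !mulrN.
have /eqP := corner_rel_residue hrel hYT hXT hTH; rewrite subr_eq => /eqP ->.
have /eqP := corner_rel_residue hrel' hY'T hX'T hTH; rewrite subr_eq => /eqP ->.
ring.
Qed.

Lemma corner_rel_pairXY lam mu T0 H0 T1 H1 X Y :
  corner_rel lam mu T0 H0 X Y -> corner_rel lam mu T1 H1 X Y ->
  slope lam mu T0 H0 X = slope lam mu T1 H1 X ->
  Y != T0 -> Y != H0 -> X != T0 -> X != H0 ->
  T1 != Y -> H1 != Y -> X != T1 -> X != H1 ->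
  lam / (Y - H0) + lam / (H1 - Y) = mu / (Y - T0) + mu / (T1 - Y).
Proof.
move=> hrel0 hrel1 eq_slope hYT0 hYH0 hXT0 hXH0 hT1Y hH1Y hXT1 hXH1.
have hYT1 : Y != T1 by rewrite eq_sym.
have hYH1 : Y != H1 by rewrite eq_sym.
have := corner_rel_balance hrel1 hYT1 hYH1 hXT1 hXH1.
rewrite -eq_slope -(corner_rel_balance hrel0 hYT0 hYH0 hXT0 hXH0).
rewrite -(opprB Y H1) -(opprB Y T1) !invrN !mulrN.
set a := lam / (Y - H0); set b := lam / (Y - H1).
set c := mu / (Y - T0); set d := mu / (Y - T1).
move=> hb; have -> : a = b - d + c by rewrite hb subrK.
ring.
Qed.
End CornerRelation.

Lemma pv_nx N (k : 'I_N) : pv (nx k) = k. Proof. exact: ordSK. Qed.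
Lemma nx_pv N (k : 'I_N) : nx (pv k) = k. Proof. exact: ord_predK. Qed.

Section PeriodicLattice.
Variables (F : fieldType) (N : nat) (lam mu : F) (x xt xh : 'I_N -> F).
Hypotheses (Ht : forall k, xt k - x k != 0) (Ht' : forall k, x k - xt (pv k) != 0)
  (Hh : forall k, xh k - x k != 0) (Hh' : forall k, x k - xh (pv k) != 0)
  (HE : forall k, cornerE lam mu x xt xh k).

Let x_neq_xt k : x k != xt k. Proof. by rewrite eq_sym -subr_eq0 Ht. Qed.
Let x_neq_xh k : x k != xh k. Proof. by rewrite eq_sym -subr_eq0 Hh. Qed.
Let x_nx_neq_xt k : x (nx k) != xt k. Proof. by rewrite -subr_eq0 -{2}(pv_nx k) Ht'. Qed.
Let x_nx_neq_xh k : x (nx k) != xh k. Proof. by rewrite -subr_eq0 -{2}(pv_nx k) Hh'. Qed.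

Lemma slope_shift k :
  slope lam mu (xt k) (xh k) (x (nx k)) = slope lam mu (xt (nx k)) (xh (nx k)) (x (nx k)).
Proof. by apply: slope_eq_of_corner; have := HE (nx k); rewrite /cornerE pv_nx. Qed.

Lemma cornerS2_rel xth k : cornerS2 lam mu x xt xh xth k <->
  corner_rel lam mu (xt (nx k)) (xh (nx k)) (x (nx k)) (xth k).
Proof.
have flip (a b c d : F) : (a - b) * (c - d) = (d - c) * (b - a) by ring.
by rewrite /cornerS2 /corner_rel -!mulrA (flip (xt _)) (flip (xh _)) !mulrA.
Qed.

Lemma cornerS1_S2 xth k : cornerS1 lam mu x xt xh xth k <-> cornerS2 lam mu x xt xh xth k.
Proof. by rewrite cornerS2_rel; apply: corner_rel_transfer (slope_shift k). Qed.

Lemma definesS1_slope k :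
  definesS1 lam mu x xt xh k <-> slope lam mu (xt k) (xh k) (x (nx k)) != 0.
Proof. by rewrite /definesS1 slope_neq0. Qed.

Lemma definesS1_S2 k : definesS1 lam mu x xt xh k <-> definesS2 lam mu x xt xh k.
Proof.
rewrite definesS1_slope slope_shift -slope_neq0 ?x_neq_xt ?x_neq_xh // /definesS2.
set X := x (nx k); set T := xt (nx k); set H := xh (nx k).
by have -> : lam * (H - X) - mu * (T - X) = mu * (X - T) - lam * (X - H) by ring.
Qed.

Variable xth : 'I_N -> F.
Hypotheses (Htht : forall k, xth k - xt k != 0) (Hthh : forall k, xth k - xh k != 0)
  (Htth : forall k, xt (nx k) - xth k != 0) (Hhth : forall k, xh (nx k) - xth k != 0)
  (HS1 : forall k, definesS1 lam mu x xt xh k /\ cornerS1 lam mu x xt xh xth k).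

Let xth_neq_xt k : xth k != xt k. Proof. by rewrite -subr_eq0 Htht. Qed.
Let xth_neq_xh k : xth k != xh k. Proof. by rewrite -subr_eq0 Hthh. Qed.
Let xt_nx_neq_xth k : xt (nx k) != xth k. Proof. by rewrite -subr_eq0 Htth. Qed.
Let xh_nx_neq_xth k : xh (nx k) != xth k. Proof. by rewrite -subr_eq0 Hhth. Qed.

Lemma xt_neq_xh k : xt k != xh k.
Proof.
have [/definesS1_slope hslope hrel] := HS1 k.
exact: corner_rel_neq hslope hrel (xth_neq_xt k).
Qed.

Lemma cornerS2_pred k : corner_rel lam mu (xt k) (xh k) (x k) (xth (pv k)).
Proof. by have := (cornerS1_S2 _ (pv k)).1 (HS1 (pv k)).2; rewrite cornerS2_rel nx_pv. Qed.

Lemma cornerE1_holds k : cornerE1 lam mu x xt xth k.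
Proof.
apply: corner_rel_pairTH (HS1 k).2 (cornerS2_pred k) (xt_neq_xh k) _ _ (xth_neq_xt k) _.
- by rewrite eq_sym x_neq_xt.
- exact: x_nx_neq_xt.
- by rewrite -{1}(nx_pv k) xt_nx_neq_xth.
Qed.

Lemma cornerE2_holds k : cornerE2 lam mu x xh xth k.
Proof.
apply: corner_rel_pairTH (corner_relC (HS1 k).2) (corner_relC (cornerS2_pred k)) _ _ _
  (xth_neq_xh k) _.
- by rewrite eq_sym xt_neq_xh.
- by rewrite eq_sym x_neq_xh.
- exact: x_nx_neq_xh.
- by rewrite -{1}(nx_pv k) xh_nx_neq_xth.
Qed.

Lemma cornerE12_holds k : cornerE12 lam mu xt xh xth k.
Proof.
have hrel1 := (cornerS2_rel _ k).1 ((cornerS1_S2 _ k).1 (HS1 k).2).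
exact: corner_rel_pairXY (HS1 k).2 hrel1 (slope_shift k) (xth_neq_xt k) (xth_neq_xh k)
  (x_nx_neq_xt k) (x_nx_neq_xh k) (xt_nx_neq_xth k) (xh_nx_neq_xth k) (x_neq_xt _) (x_neq_xh _).
Qed.
End PeriodicLattice.

Theorem theorem10 (R : realType) (N : nat) (HN : (0 < N)%N)
  (lam mu : R[i]) (x xt xh xth : 'I_N -> R[i])
  (* nondegeneracy: all denominators in (E) are nonzero *)
  (Ht : forall k, xt k - x k != 0) (Ht' : forall k, x k - xt (pv k) != 0)
  (Hh : forall k, xh k - x k != 0) (Hh' : forall k, x k - xh (pv k) != 0)
  (HE : forall k, cornerE lam mu x xt xh k) :
  ((forall k, cornerS1 lam mu x xt xh xth k) <-> (forall k, cornerS2 lam mu x xt xh xth k))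
  /\
  ((* nondegeneracy: all denominators involving xth are nonzero *)
   (forall k, xth k - xt k != 0) -> (forall k, xth k - xh k != 0) ->
   (forall k, xt (nx k) - xth k != 0) -> (forall k, xh (nx k) - xth k != 0) ->
   ((forall k, definesS1 lam mu x xt xh k /\ cornerS1 lam mu x xt xh xth k) \/
    (forall k, definesS2 lam mu x xt xh k /\ cornerS2 lam mu x xt xh xth k)) ->
   forall k, cornerE1 lam mu x xt xth k /\ cornerE2 lam mu x xh xth k
             /\ cornerE12 lam mu xt xh xth k).
Proof.
have S1_S2 := cornerS1_S2 Ht Ht' Hh Hh' HE xth.
split=> [|Htht Hthh Htth Hhth hS k]; first by split=> hS k; apply/S1_S2.
have hS1 : forall k, definesS1 lam mu x xt xh k /\ cornerS1 lam mu x xt xh xth k.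
  case: hS => // hS j; have [hdef hrel] := hS j.
  by split; [apply/(definesS1_S2 Ht Ht' Hh Hh' HE) | apply/S1_S2].
split; first exact: (cornerE1_holds Ht Ht' Hh Hh' HE Htht Htth hS1).
split; first exact: (cornerE2_holds Ht Ht' Hh Hh' HE Htht Hthh Hhth hS1).
exact: (cornerE12_holds Ht Ht' Hh Hh' HE Htht Hthh Htth Hhth hS1).
Qed.
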